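(* For fixed $\theta$, consider the function of $v\in\mathbb R^d$ \[ H(v,\theta)=\frac{\big\langle F(\Phi(\theta)+\sqrt\epsilon\,v),\ \Phi'(\theta)\big\rangle_\theta}{1-\sqrt\epsilon\langle v,\Phi''(\theta)\rangle_\theta-\sqrt\epsilon\big\langle v,\frac{d}{da}\big[P(a)^{-\top}P(a)^{-1}\big]\big|_{a=\theta}\Phi'(\theta)\big\rangle} \] (defined for $v$ near $0$). Then $H(0,\theta)=\omega_0$ and the derivative of $H$ with respect to $v$ at $v=0$ vanishes: $\frac{\partial H}{\partial v}(0,\theta)\cdot v=0$ for all $v\in\mathbb R^d$. Equivalently, for every fixed $v\in\mathbb R^d$, \[ \langle J(\theta)v,\Phi'(\theta)\rangle_\theta=-\omega_0\frac{d}{d\theta}\langle v,\Phi'(\theta)\rangle_\theta . \]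
   Context: Let $F:\mathbb R^d\to\mathbb R^d$ be $C^2$, and suppose $du/dt=F(u)$ has a periodic solution $u(t)=\Phi(\omega_0 t)$ with $\Phi$ $2\pi$-periodic and $\omega_0>0$ (so $F(\Phi(\theta))=\omega_0\Phi'(\theta)$); let $J(\theta)=DF(\Phi(\theta))$; $\epsilon>0$. Let $P(\theta)$ be a $2\pi$-periodic, $C^2$, everywhere invertible real matrix function whose first column is $\Phi'(\theta)$, and $\mathcal S=\mathrm{diag}(\nu_1,\dots,\nu_d)$ real diagonal with $\nu_1=0$, such that $\omega_0P'(\theta)=J(\theta)P(\theta)-P(\theta)\mathcal S$. Weighted inner product: $\langle x,y\rangle_\theta=\langle P(\theta)^{-1}x,P(\theta)^{-1}y\rangle$ with $\langle\cdot,\cdot\rangle$ the Euclidean inner product; $P^{-\top}$ denotes $(P^{-1})^\top$. *)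

From Stdlib Require Import Reals Lra.
Open Scope R_scope.

(* Vectors of R^d are represented as functions nat -> R; only the
   coordinates i < d are meaningful.  Matrices are nat -> nat -> R. *)
Definition vec := nat -> R.
Definition mat := nat -> nat -> R.

Fixpoint rsum (n : nat) (f : nat -> R) : R :=
  match n with
  | O => 0
  | S k => rsum k f + f k
  end.

Definition dot (d : nat) (x y : vec) : R := rsum d (fun i => x i * y i).
Definition vnorm (d : nat) (x : vec) : R := sqrt (dot d x x).

Definition vadd (x y : vec) : vec := fun i => x i + y i.
Definition vscal (c : R) (x : vec) : vec := fun i => c * x i.
Definition vzero : vec := fun _ => 0.

Definition mv (d : nat) (A : mat) (x : vec) : vec :=
  fun i => rsum d (fun j => A i j * x j).

Definition has_grad (d : nat) (g : vec -> R) (x : vec) (G : vec) : Prop :=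
  forall eps, 0 < eps -> exists delta, 0 < delta /\
    forall h, vnorm d h < delta ->
      Rabs (g (vadd x h) - g x - dot d G h) <= eps * vnorm d h.

Definition cont_at (d : nat) (g : vec -> R) (x : vec) : Prop :=
  forall eps, 0 < eps -> exists delta, 0 < delta /\
    forall y, vnorm d (vadd y (vscal (-1) x)) < delta -> Rabs (g y - g x) < eps.

Definition C2_with_jacobian (d : nat) (F : vec -> vec) (DF : vec -> mat) : Prop :=
  exists D2F : vec -> nat -> nat -> nat -> R,
    (forall x i, (i < d)%nat -> has_grad d (fun y => F y i) x (fun j => DF x i j)) /\
    (forall x i j, (i < d)%nat -> (j < d)%nat ->
        has_grad d (fun y => DF y i j) x (fun k => D2F x i j k)) /\
    (forall x i j k, (i < d)%nat -> (j < d)%nat -> (k < d)%nat ->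
        cont_at d (fun y => D2F y i j k) x).

(* weighted inner product <x,y>_theta = <P^{-1} x, P^{-1} y>, Pinv a = P(a)^{-1} *)
Definition ipw (d : nat) (Pinv : R -> mat) (a : R) (x y : vec) : R :=
  dot d (mv d (Pinv a) x) (mv d (Pinv a) y).

Definition Mw (d : nat) (Pinv : R -> mat) (a : R) : mat :=
  fun i j => rsum d (fun k => Pinv a k i * Pinv a k j).

(* the function H(v, theta) of the statement; dM is the derivative of
   a |-> P(a)^{-T}P(a)^{-1} at a = theta. *)
Definition Hfun (d : nat) (F : vec -> vec) (Phi dPhi ddPhi : R -> vec)
  (Pinv : R -> mat) (dM : mat) (eps theta : R) (v : vec) : R :=
  ipw d Pinv theta (F (vadd (Phi theta) (vscal (sqrt eps) v))) (dPhi theta)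
  / (1 - sqrt eps * ipw d Pinv theta v (ddPhi theta)
       - sqrt eps * dot d v (mv d dM (dPhi theta))).

(* Since P(a) e_0 = Phi'(a) and the columns of P(a) are orthonormal for <.,.>_a, the
   functional <x, Phi'(a)>_a is x |-> p(a).x with p(a) the first row of P(a)^-1.
   Differentiating p P = e_0^T and inserting the Floquet equation
   omega0 P' = J P - P S (with nu_1 = 0) gives omega0 p' = - p J, which is the stated
   derivative identity.  Consequently the numerator of H is
   p.F(Phi + sqrt eps v) = omega0 - omega0 sqrt eps p'.v + o(v), i.e. omega0 times the
   (affine) denominator up to o(v), so H is stationary at v = 0 with value omega0. *)

From Stdlib Require Import Reals Lra Lia FunctionalExtensionality.
Open Scope R_scope.

Lemma rsum_ext n f g : (forall i, (i < n)%nat -> f i = g i) -> rsum n f = rsum n g.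
Proof.
induction n as [|n IH]; intros H; simpl; [reflexivity|].
rewrite IH, H by (try intros; try apply H; lia); reflexivity.
Qed.

Lemma rsum_plus n f g : rsum n (fun i => f i + g i) = rsum n f + rsum n g.
Proof. induction n as [|n IH]; simpl; [|rewrite IH]; lra. Qed.

Lemma rsum_scal n c f : rsum n (fun i => c * f i) = c * rsum n f.
Proof. induction n as [|n IH]; simpl; [|rewrite IH]; lra. Qed.

Lemma rsum_scal_r n c f : rsum n (fun i => f i * c) = rsum n f * c.
Proof. induction n as [|n IH]; simpl; [|rewrite IH]; lra. Qed.

Lemma rsum_zero n : rsum n (fun _ => 0) = 0.
Proof. induction n as [|n IH]; simpl; [|rewrite IH]; lra. Qed.

Lemma rsum_swap n m f :
  rsum n (fun i => rsum m (fun j => f i j)) = rsum m (fun j => rsum n (fun i => f i j)).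
Proof.
induction n as [|n IH]; simpl.
- symmetry; apply rsum_zero.
- rewrite IH, rsum_plus; reflexivity.
Qed.

Lemma rsum_delta n k f : (k < n)%nat ->
  rsum n (fun i => f i * (if Nat.eqb i k then 1 else 0)) = f k.
Proof.
induction n as [|n IH]; intros Hk; [lia|]; simpl.
destruct (Nat.eq_dec k n) as [->|Hkn].
- rewrite Nat.eqb_refl, (rsum_ext _ _ (fun _ => 0)), rsum_zero; [lra|].
  intros i Hi; replace (Nat.eqb i n) with false by (symmetry; apply Nat.eqb_neq; lia); lra.
- rewrite IH by lia; replace (Nat.eqb n k) with false by (symmetry; apply Nat.eqb_neq; lia); lra.
Qed.

Lemma rsum_le n f g : (forall i, (i < n)%nat -> f i <= g i) -> rsum n f <= rsum n g.
Proof.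
induction n as [|n IH]; intros H; simpl; [lra|].
apply Rplus_le_compat; [apply IH; intros|apply H]; auto with arith.
Qed.

Lemma rsum_nonneg n f : (forall i, (i < n)%nat -> 0 <= f i) -> 0 <= rsum n f.
Proof. intros H; rewrite <- (rsum_zero n); apply rsum_le; exact H. Qed.

Lemma rsum_ge_term n f k : (forall i, (i < n)%nat -> 0 <= f i) -> (k < n)%nat ->
  f k <= rsum n f.
Proof.
induction n as [|n IH]; intros H Hk; [lia|]; simpl.
destruct (Nat.eq_dec k n) as [->|Hkn].
- assert (0 <= rsum n f) by (apply rsum_nonneg; auto with arith); lra.
- assert (f k <= rsum n f) by (apply IH; auto with arith; lia).
  assert (0 <= f n) by auto with arith; lra.
Qed.

Lemma rsum_abs n f : Rabs (rsum n f) <= rsum n (fun i => Rabs (f i)).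
Proof.
induction n as [|n IH]; simpl; [rewrite Rabs_R0; lra|].
eapply Rle_trans; [apply Rabs_triang|lra].
Qed.
Section Vectors.
Variable d : nat.

Lemma dot_ext x x' y y' : (forall i, (i < d)%nat -> x i = x' i) ->
  (forall i, (i < d)%nat -> y i = y' i) -> dot d x y = dot d x' y'.
Proof. intros Hx Hy; apply rsum_ext; intros i Hi; rewrite Hx, Hy; auto. Qed.

Lemma dot_comm x y : dot d x y = dot d y x.
Proof. apply rsum_ext; intros; ring. Qed.

Lemma dot_vzero_l y : dot d vzero y = 0.
Proof.
rewrite <- (rsum_zero d); apply rsum_ext; intros; unfold vzero; ring.
Qed.

Lemma dot_vadd_l x y z : dot d (vadd x y) z = dot d x z + dot d y z.
Proof. unfold dot, vadd; rewrite <- rsum_plus; apply rsum_ext; intros; ring. Qed.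

Lemma dot_vscal_l c x y : dot d (vscal c x) y = c * dot d x y.
Proof. unfold dot, vscal; rewrite <- rsum_scal; apply rsum_ext; intros; ring. Qed.

Lemma dot_mv_l A x y :
  dot d (mv d A x) y = dot d x (fun j => rsum d (fun i => A i j * y i)).
Proof.
unfold dot, mv.
rewrite (rsum_ext _ _ (fun i => rsum d (fun j => A i j * x j * y i)))
  by (intros; rewrite <- rsum_scal_r; reflexivity).
rewrite rsum_swap; apply rsum_ext; intros j _.
rewrite <- rsum_scal; apply rsum_ext; intros; ring.
Qed.

Lemma vnorm_nonneg h : 0 <= vnorm d h.
Proof. apply sqrt_pos. Qed.

Lemma coord_le_vnorm h i : (i < d)%nat -> Rabs (h i) <= vnorm d h.
Proof.
intros Hi; unfold vnorm; rewrite <- sqrt_Rsqr_abs; apply sqrt_le_1_alt.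
apply (rsum_ge_term d (fun i => h i * h i)); auto; intros; nra.
Qed.

Lemma vnorm_vscal c h : vnorm d (vscal c h) = Rabs c * vnorm d h.
Proof.
unfold vnorm; rewrite dot_vscal_l, dot_comm, dot_vscal_l, <- Rmult_assoc.
assert (0 <= dot d h h) by (apply rsum_nonneg; intros; nra).
rewrite sqrt_mult_alt, <- sqrt_Rsqr_abs by nra; reflexivity.
Qed.

Lemma dot_bound G h : Rabs (dot d G h) <= rsum d (fun i => Rabs (G i)) * vnorm d h.
Proof.
eapply Rle_trans; [apply rsum_abs|]; rewrite <- rsum_scal_r.
apply rsum_le; intros i Hi; rewrite Rabs_mult.
apply Rmult_le_compat_l; [apply Rabs_pos|apply coord_le_vnorm; exact Hi].
Qed.

End Vectors.

Lemma vadd_vzero_l x : vadd vzero x = x.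
Proof. apply functional_extensionality; intros; unfold vadd, vzero; ring. Qed.

Lemma vadd_vzero_r x : vadd x vzero = x.
Proof. apply functional_extensionality; intros; unfold vadd, vzero; ring. Qed.

Lemma vscal_vzero c : vscal c vzero = vzero.
Proof. apply functional_extensionality; intros; unfold vscal, vzero; ring. Qed.

Lemma ipw_eq_dot_Mw d Pinv a x y : ipw d Pinv a x y = dot d x (mv d (Mw d Pinv a) y).
Proof.
unfold ipw; rewrite dot_mv_l; apply dot_ext; [reflexivity|intros i _].
unfold mv, Mw.
rewrite (rsum_ext _ _ (fun k => rsum d (fun j => Pinv a k i * Pinv a k j * y j)))
  by (intros; rewrite <- rsum_scal; apply rsum_ext; intros; ring).
rewrite rsum_swap; apply rsum_ext; intros; apply rsum_scal_r.
Qed.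

Lemma derivable_pt_lim_rsum n (g : R -> nat -> R) (l : nat -> R) a :
  (forall k, (k < n)%nat -> derivable_pt_lim (fun t => g t k) a (l k)) ->
  derivable_pt_lim (fun t => rsum n (g t)) a (rsum n l).
Proof.
induction n as [|n IH]; intros H; simpl; [apply derivable_pt_lim_const|].
apply (derivable_pt_lim_plus (fun t => rsum n (g t)) (fun t => g t n));
  [apply IH; intros|apply H]; auto with arith.
Qed.

Lemma derivable_pt_lim_dot d (u w : R -> vec) (u' w' : vec) a :
  (forall i, (i < d)%nat -> derivable_pt_lim (fun t => u t i) a (u' i)) ->
  (forall i, (i < d)%nat -> derivable_pt_lim (fun t => w t i) a (w' i)) ->
  derivable_pt_lim (fun t => dot d (u t) (w t)) a (dot d u' (w a) + dot d (u a) w').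
Proof.
intros Hu Hw; unfold dot; rewrite <- rsum_plus.
apply (derivable_pt_lim_rsum d (fun t i => u t i * w t i)); intros i Hi.
apply (derivable_pt_lim_mult (fun t => u t i) (fun t => w t i)); auto.
Qed.

Section Gradients.
Variable d : nat.

Lemma has_grad_ext (g g' : vec -> R) x G G' : (forall y, g y = g' y) ->
  (forall i, (i < d)%nat -> G i = G' i) -> has_grad d g x G -> has_grad d g' x G'.
Proof.
intros Hg HG H e He; destruct (H e He) as [delta [Hdelta Hh]].
exists delta; split; [exact Hdelta|]; intros h Hnh.
rewrite <- !Hg, <- (dot_ext d G G' h h HG) by reflexivity; auto.
Qed.

Lemma has_grad_const c x : has_grad d (fun _ => c) x vzero.
Proof.
intros e He; exists 1; split; [lra|]; intros h _.
rewrite dot_vzero_l, Rminus_diag, Rminus_0_l, Ropp_0, Rabs_R0.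
apply Rmult_le_pos; [lra|apply vnorm_nonneg].
Qed.

Lemma has_grad_plus g1 g2 x G1 G2 : has_grad d g1 x G1 -> has_grad d g2 x G2 ->
  has_grad d (fun y => g1 y + g2 y) x (vadd G1 G2).
Proof.
intros H1 H2 e He.
destruct (H1 (e / 2)) as [delta1 [Hdelta1 Hh1]]; [lra|].
destruct (H2 (e / 2)) as [delta2 [Hdelta2 Hh2]]; [lra|].
exists (Rmin delta1 delta2); split; [apply Rmin_pos; assumption|]; intros h Hnh.
specialize (Hh1 h (Rlt_le_trans _ _ _ Hnh (Rmin_l _ _))).
specialize (Hh2 h (Rlt_le_trans _ _ _ Hnh (Rmin_r _ _))).
rewrite dot_vadd_l.
replace (e * vnorm d h) with (e / 2 * vnorm d h + e / 2 * vnorm d h) by field.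
eapply Rle_trans; [|apply Rplus_le_compat; [exact Hh1|exact Hh2]].
eapply Rle_trans; [|apply Rabs_triang]; right; f_equal; ring.
Qed.

Lemma has_grad_scal_r g x G c :
  has_grad d g x G -> has_grad d (fun y => g y * c) x (vscal c G).
Proof.
intros H e He.
destruct (H (e / (Rabs c + 1))) as [delta [Hdelta Hh]].
{ apply Rdiv_lt_0_compat; [lra|pose proof (Rabs_pos c); lra]. }
exists delta; split; [exact Hdelta|]; intros h Hnh.
rewrite dot_vscal_l.
replace (g (vadd x h) * c - g x * c - c * dot d G h)
  with (c * (g (vadd x h) - g x - dot d G h)) by ring.
rewrite Rabs_mult.
apply Rle_trans with (Rabs c * (e / (Rabs c + 1) * vnorm d h)).
{ apply Rmult_le_compat_l; [apply Rabs_pos|auto]. }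
pose proof (Rabs_pos c); pose proof (vnorm_nonneg d h).
replace e with ((Rabs c + 1) * (e / (Rabs c + 1))) at 2 by (field; lra).
assert (0 <= e / (Rabs c + 1) * vnorm d h)
  by (apply Rmult_le_pos; [apply Rlt_le, Rdiv_lt_0_compat|]; lra).
nra.
Qed.

Lemma has_grad_rsum n (g : nat -> vec -> R) (G : nat -> vec) x :
  (forall i, (i < n)%nat -> has_grad d (g i) x (G i)) ->
  has_grad d (fun y => rsum n (fun i => g i y)) x (fun j => rsum n (fun i => G i j)).
Proof.
induction n as [|n IH]; intros H.
- exact (has_grad_ext _ _ x _ _ (fun _ => eq_refl) (fun _ _ => eq_refl) (has_grad_const 0 x)).
- refine (has_grad_ext _ _ x _ _ (fun _ => eq_refl) (fun _ _ => eq_refl)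
    (has_grad_plus _ _ x _ _ (IH _) (H n _))); auto with arith.
Qed.

Lemma has_grad_comp_affine g x s G : has_grad d g x G ->
  has_grad d (fun v => g (vadd x (vscal s v))) vzero (vscal s G).
Proof.
intros H e He; pose proof (Rabs_pos s).
destruct (H (e / (Rabs s + 1))) as [delta [Hdelta Hh]].
{ apply Rdiv_lt_0_compat; lra. }
exists (delta / (Rabs s + 1)); split; [apply Rdiv_lt_0_compat; lra|]; intros h Hnh.
rewrite vadd_vzero_l, vscal_vzero, vadd_vzero_r, dot_vscal_l.
pose proof (vnorm_nonneg d h).
assert (Hsh : vnorm d (vscal s h) < delta).
{ rewrite vnorm_vscal.
  apply Rle_lt_trans with ((Rabs s + 1) * vnorm d h); [nra|].
  apply (Rmult_lt_compat_l (Rabs s + 1)) in Hnh; [|lra].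
  replace ((Rabs s + 1) * (delta / (Rabs s + 1))) with delta in Hnh by (field; lra); lra. }
specialize (Hh _ Hsh); rewrite dot_comm, dot_vscal_l, dot_comm, vnorm_vscal in Hh.
eapply Rle_trans; [exact Hh|].
replace e with ((Rabs s + 1) * (e / (Rabs s + 1))) at 2 by (field; lra).
assert (0 <= e / (Rabs s + 1)) by (apply Rlt_le, Rdiv_lt_0_compat; lra).
nra.
Qed.

Lemma has_grad_div_affine N Den x G :
  has_grad d N x (vscal (N x) G) ->
  (forall h, Den (vadd x h) = 1 + dot d G h) ->
  has_grad d (fun y => N y / Den y) x vzero.
Proof.
intros HN HDen e He.
assert (HDx : Den x = 1).
{ rewrite <- (vadd_vzero_r x), HDen, dot_comm, dot_vzero_l; ring. }
set (K := rsum d (fun i => Rabs (G i))).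
assert (HK : 0 <= K) by (apply rsum_nonneg; intros; apply Rabs_pos).
destruct (HN (e / 2)) as [delta [Hdelta Hh]]; [lra|].
exists (Rmin delta (1 / (2 * (K + 1)))); split.
{ apply Rmin_pos; [exact Hdelta|apply Rdiv_lt_0_compat; lra]. }
intros h Hnh; pose proof (vnorm_nonneg d h).
specialize (Hh h (Rlt_le_trans _ _ _ Hnh (Rmin_l _ _))).
assert (Hsmall : Rabs (dot d G h) <= 1 / 2).
{ eapply Rle_trans; [apply dot_bound|].
  assert (Hnh' : vnorm d h < 1 / (2 * (K + 1))) by (eapply Rlt_le_trans; [exact Hnh|apply Rmin_r]).
  apply (Rmult_lt_compat_l (K + 1)) in Hnh'; [|lra].
  replace ((K + 1) * (1 / (2 * (K + 1)))) with (1 / 2) in Hnh' by (field; lra).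
  fold K; nra. }
assert (Hpos : 1 / 2 <= 1 + dot d G h)
  by (pose proof (Rle_abs (- dot d G h)); rewrite Rabs_Ropp in *; lra).
rewrite HDen, HDx, dot_vzero_l, dot_vscal_l in *.
replace (N (vadd x h) / (1 + dot d G h) - N x / 1 - 0)
  with ((N (vadd x h) - N x - N x * dot d G h) / (1 + dot d G h)) by (field; lra).
unfold Rdiv at 1; rewrite Rabs_mult, Rabs_inv, (Rabs_pos_eq (1 + _)) by lra.
assert (Hinv : / (1 + dot d G h) <= 2).
{ replace 2 with (/ (1 / 2)) by field; apply Rinv_le_contravar; lra. }
apply Rle_trans with (e / 2 * vnorm d h * 2); [|right; field].
apply Rmult_le_compat; auto using Rabs_pos.
apply Rlt_le, Rinv_0_lt_compat; lra.
Qed.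

End Gradients.

Section Floquet_frame.
Variables (d : nat) (P Pinv : R -> mat).
Hypothesis HPinv_l : forall a i j, (i < d)%nat -> (j < d)%nat ->
  rsum d (fun k => Pinv a i k * P a k j) = if Nat.eqb i j then 1 else 0.
Hypothesis HPinv_r : forall a i j, (i < d)%nat -> (j < d)%nat ->
  rsum d (fun k => P a i k * Pinv a k j) = if Nat.eqb i j then 1 else 0.

Lemma ipw_columns a j l : (j < d)%nat -> (l < d)%nat ->
  ipw d Pinv a (fun i => P a i j) (fun i => P a i l) = if Nat.eqb j l then 1 else 0.
Proof.
intros Hj Hl; unfold ipw.
rewrite (dot_ext d _ (fun k => if Nat.eqb k j then 1 else 0)
                   _ (fun k => if Nat.eqb k l then 1 else 0))
  by (intros k Hk; apply HPinv_l; assumption).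
unfold dot; rewrite rsum_delta, Nat.eqb_sym by exact Hl; reflexivity.
Qed.

Lemma eq0_of_dot_columns a w : (forall j, (j < d)%nat -> dot d (fun i => P a i j) w = 0) ->
  forall i, (i < d)%nat -> w i = 0.
Proof.
intros Hw i Hi; rewrite <- (rsum_delta d i w Hi).
rewrite (rsum_ext _ _ (fun k => rsum d (fun j => w k * P a k j * Pinv a j i))).
- rewrite rsum_swap, <- (rsum_zero d); apply rsum_ext; intros j Hj.
  rewrite rsum_scal_r; replace (rsum d (fun k => w k * P a k j)) with 0; [ring|].
  rewrite <- (Hw j Hj); apply dot_comm.
- intros k Hk; rewrite <- (HPinv_r a k i Hk Hi), <- rsum_scal.
  apply rsum_ext; intros; ring.
Qed.

Variables (omega0 : R) (J : mat) (dPhi ddPhi : R -> vec) (dP dM : mat)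
  (nu : nat -> R) (theta : R).
Hypothesis Hd : (0 < d)%nat.
Hypothesis Hcol0 : forall a i, (i < d)%nat -> P a i 0%nat = dPhi a i.
Hypothesis Hnu0 : nu 0%nat = 0.
Hypothesis HFloquet : forall i j, (i < d)%nat -> (j < d)%nat ->
  omega0 * dP i j = rsum d (fun k => J i k * P theta k j) - P theta i j * nu j.
Hypothesis HdP : forall i j, (i < d)%nat -> (j < d)%nat ->
  derivable_pt_lim (fun t => P t i j) theta (dP i j).
Hypothesis HddPhi : forall i, (i < d)%nat ->
  derivable_pt_lim (fun t => dPhi t i) theta (ddPhi theta i).
Hypothesis HdM : forall i j, (i < d)%nat -> (j < d)%nat ->
  derivable_pt_lim (fun a => Mw d Pinv a i j) theta (dM i j).

(* The covector p(a) of the header: [<x, Phi'(a)>_a = dot d x (tangent_covector a)]. *)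
Definition tangent_covector (a : R) : vec := mv d (Mw d Pinv a) (dPhi a).

Definition tangent_covector_deriv : vec :=
  vadd (mv d dM (dPhi theta)) (mv d (Mw d Pinv theta) (ddPhi theta)).

Lemma dot_column_tangent_covector a j : (j < d)%nat ->
  dot d (fun i => P a i j) (tangent_covector a) = if Nat.eqb j 0 then 1 else 0.
Proof.
intros Hj; unfold tangent_covector; rewrite <- ipw_eq_dot_Mw, <- (ipw_columns a j 0 Hj Hd).
unfold ipw; apply dot_ext; [reflexivity|intros k _].
unfold mv; apply rsum_ext; intros i Hi; rewrite Hcol0; auto.
Qed.

Lemma dot_tangent_covector a : dot d (dPhi a) (tangent_covector a) = 1.
Proof.
transitivity (dot d (fun i => P a i 0%nat) (tangent_covector a));
  [|exact (dot_column_tangent_covector a 0 Hd)].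
apply dot_ext; [intros i Hi; symmetry; auto|reflexivity].
Qed.

Lemma tangent_covector_derivable i : (i < d)%nat ->
  derivable_pt_lim (fun a => tangent_covector a i) theta (tangent_covector_deriv i).
Proof.
intros Hi.
exact (derivable_pt_lim_dot d (fun a j => Mw d Pinv a i j) dPhi (fun j => dM i j)
  (ddPhi theta) theta
  (fun j Hj => HdM i j Hi Hj) HddPhi).
Qed.

Lemma tangent_covector_deriv_columns j : (j < d)%nat ->
  dot d (fun i => dP i j) (tangent_covector theta)
  + dot d (fun i => P theta i j) tangent_covector_deriv = 0.
Proof.
intros Hj.
apply (uniqueness_limite (fun a => dot d (fun i => P a i j) (tangent_covector a)) theta).
- apply derivable_pt_lim_dot; [intros i Hi; auto|exact tangent_covector_derivable].
- apply (derivable_pt_lim_ext (fun _ => if Nat.eqb j 0 then 1 else 0)).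
  + intros a; symmetry; exact (dot_column_tangent_covector a j Hj).
  + apply derivable_pt_lim_const.
Qed.

(* Differentiating [p(a) P(a) = e_0^T] and inserting the Floquet equation gives
   [(omega0 p' + p J) P = nu_0 e_0^T = 0]. *)
Lemma tangent_covector_deriv_eq i : (i < d)%nat ->
  omega0 * tangent_covector_deriv i = - rsum d (fun k => J k i * tangent_covector theta k).
Proof.
set (c := tangent_covector theta); set (c' := tangent_covector_deriv).
set (JTc := fun i => rsum d (fun k => J k i * c k)).
intros Hi; enough (vadd (vscal omega0 c') JTc i = 0) by (unfold vadd, vscal, JTc in *; lra).
apply (eq0_of_dot_columns theta); [|exact Hi]; intros j Hj.
assert (HJcol : dot d (fun i => P theta i j) JTc
          = omega0 * dot d (fun i => dP i j) c + nu j * dot d (fun i => P theta i j) c).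
{ unfold JTc; rewrite <- dot_mv_l, <- dot_vscal_l, <- dot_vscal_l, <- dot_vadd_l.
  apply dot_ext; [intros k Hk|reflexivity].
  unfold vadd, vscal, mv; rewrite HFloquet by assumption; ring. }
rewrite dot_comm, dot_vadd_l, dot_vscal_l, (dot_comm d JTc), HJcol.
rewrite dot_comm, dot_column_tangent_covector by exact Hj; fold c.
replace (nu j * (if Nat.eqb j 0 then 1 else 0)) with 0
  by (destruct (Nat.eqb_spec j 0) as [->|]; [rewrite Hnu0|]; ring).
pose proof (tangent_covector_deriv_columns j Hj); fold c c' in H.
nra.
Qed.

Lemma derivable_ipw_tangent v : omega0 <> 0 ->
  derivable_pt_lim (fun a => ipw d Pinv a v (dPhi a)) theta
    (- ipw d Pinv theta (mv d J v) (dPhi theta) / omega0).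
Proof.
intros Homega.
apply (derivable_pt_lim_ext (fun a => dot d v (tangent_covector a)));
  [intros a; symmetry; apply ipw_eq_dot_Mw|].
replace (- ipw d Pinv theta (mv d J v) (dPhi theta) / omega0)
  with (dot d vzero (tangent_covector theta) + dot d v tangent_covector_deriv).
- apply derivable_pt_lim_dot;
    [intros; apply derivable_pt_lim_const|exact tangent_covector_derivable].
- rewrite dot_vzero_l, ipw_eq_dot_Mw, dot_mv_l; fold (tangent_covector theta).
  rewrite (dot_ext d v v (fun j => rsum d (fun i => J i j * tangent_covector theta i))
    (vscal (- omega0) tangent_covector_deriv)); [|reflexivity|].
  + rewrite (dot_comm d v (vscal _ _)), dot_vscal_l, dot_comm; field; exact Homega.
  + intros i Hi; unfold vscal; rewrite <- Ropp_mult_distr_l, tangent_covector_deriv_eq by exact Hi.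
    rewrite Ropp_involutive; apply rsum_ext; intros; ring.
Qed.

Variables (F : vec -> vec) (Phi : R -> vec) (eps : R).
Hypothesis HF : forall i, (i < d)%nat ->
  has_grad d (fun y => F y i) (Phi theta) (fun j => J i j).
Hypothesis Horbit : forall i, (i < d)%nat -> F (Phi theta) i = omega0 * dPhi theta i.

Lemma Hfun_eq v : Hfun d F Phi dPhi ddPhi Pinv dM eps theta v
  = dot d (F (vadd (Phi theta) (vscal (sqrt eps) v))) (tangent_covector theta)
    / (1 + dot d (vscal (- sqrt eps) tangent_covector_deriv) v).
Proof.
unfold Hfun; rewrite !ipw_eq_dot_Mw; f_equal.
unfold tangent_covector_deriv; rewrite dot_vscal_l, dot_vadd_l, !(dot_comm d _ v); ring.
Qed.

Lemma dot_orbit_tangent_covector :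
  dot d (F (Phi theta)) (tangent_covector theta) = omega0.
Proof.
rewrite (dot_ext d _ (vscal omega0 (dPhi theta)) _ (tangent_covector theta)) by auto.
rewrite dot_vscal_l, dot_tangent_covector; ring.
Qed.

Lemma Hfun_vzero : Hfun d F Phi dPhi ddPhi Pinv dM eps theta vzero = omega0.
Proof.
rewrite Hfun_eq, vscal_vzero, vadd_vzero_r, dot_orbit_tangent_covector.
rewrite dot_comm, dot_vzero_l; field.
Qed.

Lemma has_grad_Hfun_vzero : has_grad d (Hfun d F Phi dPhi ddPhi Pinv dM eps theta) vzero vzero.
Proof.
set (c := tangent_covector theta).
set (G := vscal (- sqrt eps) tangent_covector_deriv).
set (N := fun v => dot d (F (vadd (Phi theta) (vscal (sqrt eps) v))) c).
apply (has_grad_ext d (fun v => N v / (1 + dot d G v)) _ vzero vzero vzero);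
  [intros v; symmetry; apply Hfun_eq|reflexivity|].
apply (has_grad_div_affine d N (fun v => 1 + dot d G v) vzero G);
  [|intros h; rewrite vadd_vzero_l; reflexivity].
assert (HN0 : N vzero = omega0).
{ unfold N; rewrite vscal_vzero, vadd_vzero_r; apply dot_orbit_tangent_covector. }
rewrite HN0.
assert (Hcomb : has_grad d (fun y => dot d (F y) c) (Phi theta)
                  (fun j => rsum d (fun i => vscal (c i) (fun j => J i j) j))).
{ apply (has_grad_rsum d d (fun i y => F y i * c i)); intros i Hi.
  apply has_grad_scal_r, HF, Hi. }
refine (has_grad_ext d _ _ vzero _ _ (fun _ => eq_refl) _
          (has_grad_comp_affine d _ _ (sqrt eps) _ Hcomb)).
intros j Hj; unfold G, vscal.
replace (omega0 * (- sqrt eps * tangent_covector_deriv j))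
  with (- sqrt eps * (omega0 * tangent_covector_deriv j)) by ring.
rewrite tangent_covector_deriv_eq by exact Hj; fold c.
rewrite (rsum_ext _ _ (fun k => J k j * c k)) by (intros; ring); ring.
Qed.

End Floquet_frame.

Theorem mainTheorem4
  (d : nat) (Hd : (0 < d)%nat)
  (F : vec -> vec) (DF : vec -> mat) (HF : C2_with_jacobian d F DF)
  (omega0 : R) (Homega : 0 < omega0)
  (Phi dPhi ddPhi : R -> vec)
  (HPhi_per : forall a i, Phi (a + 2 * PI) i = Phi a i)
  (HdPhi : forall a i, (i < d)%nat -> derivable_pt_lim (fun t => Phi t i) a (dPhi a i))
  (HddPhi : forall a i, (i < d)%nat -> derivable_pt_lim (fun t => dPhi t i) a (ddPhi a i))
  (Horbit : forall a i, (i < d)%nat -> F (Phi a) i = omega0 * dPhi a i)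
  (eps : R) (Heps : 0 < eps)
  (P Pinv dP ddP : R -> mat) (nu : nat -> R)
  (HP_per : forall a i j, P (a + 2 * PI) i j = P a i j)
  (HdP : forall a i j, (i < d)%nat -> (j < d)%nat ->
           derivable_pt_lim (fun t => P t i j) a (dP a i j))
  (HddP : forall a i j, (i < d)%nat -> (j < d)%nat ->
           derivable_pt_lim (fun t => dP t i j) a (ddP a i j))
  (HddP_cont : forall i j, (i < d)%nat -> (j < d)%nat -> continuity (fun t => ddP t i j))
  (HPinv_r : forall a i j, (i < d)%nat -> (j < d)%nat ->
           rsum d (fun k => P a i k * Pinv a k j) = if Nat.eqb i j then 1 else 0)
  (HPinv_l : forall a i j, (i < d)%nat -> (j < d)%nat ->
           rsum d (fun k => Pinv a i k * P a k j) = if Nat.eqb i j then 1 else 0)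
  (Hcol1 : forall a i, (i < d)%nat -> P a i 0%nat = dPhi a i)
  (Hnu1 : nu 0%nat = 0)
  (HFloquet : forall a i j, (i < d)%nat -> (j < d)%nat ->
           omega0 * dP a i j = rsum d (fun k => DF (Phi a) i k * P a k j) - P a i j * nu j)
  (theta : R) (dM : mat)
  (HdM : forall i j, (i < d)%nat -> (j < d)%nat ->
           derivable_pt_lim (fun a => Mw d Pinv a i j) theta (dM i j)) :
  Hfun d F Phi dPhi ddPhi Pinv dM eps theta vzero = omega0 /\
  has_grad d (Hfun d F Phi dPhi ddPhi Pinv dM eps theta) vzero vzero /\
  (forall v : vec,
     derivable_pt_lim (fun a => ipw d Pinv a v (dPhi a)) theta
       (- ipw d Pinv theta (mv d (DF (Phi theta)) v) (dPhi theta) / omega0)).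
Proof.
destruct HF as [_ [HF_grad _]].
split; [|split].
- eapply Hfun_vzero; eauto.
- eapply (has_grad_Hfun_vzero d P Pinv HPinv_l HPinv_r omega0 (DF (Phi theta)) dPhi ddPhi
    (dP theta) dM nu theta); eauto.
- intros v; eapply (derivable_ipw_tangent d P Pinv HPinv_l HPinv_r omega0 (DF (Phi theta))
    dPhi ddPhi (dP theta) dM nu theta); eauto; lra.
Qed.
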